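(* Let $\Phi=\varphi\land\bigwedge RE\land\bigwedge DI$ be an $\mathcal{ALCQIO}_{b,Re}$-formula over $\tau$ with $RE=\{\mathit{Reach}(B_1,S_1,A_1),\dots,\mathit{Reach}(B_h,S_h,A_h)\}$. Then $\mathrm{ORD}(\varphi)$ is non-empty iff there is a (finite) $\tau$-structure $\mathcal{M}$ with $\mathcal{M}\models\varphi$ that has an $h'$-useful labeling for every $1\le h'\le h$.
   Context: Structures are finite; $\tau$ has atomic concepts, atomic roles (a subset $\mathsf{N_F}$ functional, interpreted as partial functions) and nominals; $\tau$ contains all symbols of $\Phi$. $\mathcal{ALCQIO}_b$: concepts built from atomic concepts and nominals using $\sqcap,\sqcup,\neg,\exists r.C,\exists^{\le n}r.C$ for roles atomic or inverse; formulae are Boolean combinations of inclusions $C\sqsubseteq D$ and equalities; standard semantics. A reachability assertion $\mathit{Reach}(B,S,A)$ has atomic concepts $A,B$ and $S\subseteq\mathsf{N_F}$; an $\mathcal{ALCQIO}_{b,Re}$-formula is $\Phi=\varphi\land\bigwedge RE\land\bigwedge DI$ with $\varphi\in\mathcal{ALCQIO}_b$, $RE$ a finite set of reachability assertions, $DI$ a finite set of disjointness assertions $A_1\sqcap A_2\equiv\bot$, compatible (whenever two assertions of $RE$ share a role, their $A$-concepts are declared disjoint in $DI$). $D^{\mathcal{M}}_{h'}$ is the directed graph on vertex set $A_{h'}^{\mathcal{M}}$ with edges $\bigcup_{s\in S_{h'}}s^{\mathcal{M}}\cap(A_{h'}^{\mathcal{M}}\times A_{h'}^{\mathcal{M}})$.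 Types: $\mathrm{Con}(\varphi)$ is the set of concepts occurring in $\varphi$ (including subconcepts), $\mathrm{TYPES}_\varphi$ its power set, $\overline{tp}^{\varphi}_{\mathcal{M}}(u)=\{C\in\mathrm{Con}(\varphi)\mid u\in C^{\mathcal{M}}\}$. Given a finite set $L$ with a strict linear order $<$ of size $|\mathrm{TYPES}_\varphi|$ (by default $[1,|\mathrm{TYPES}_\varphi|]$ with the usual order), an $h'$-useful labeling for $\mathcal{M}$ (with values in $L$) is $f:A_{h'}^{\mathcal{M}}\to L$ such that (1) $f(u)=f(v)$ implies equal types, and (2) for every $u\in A_{h'}^{\mathcal{M}}$, either $u\in B_{h'}^{\mathcal{M}}$ or there are $v,w\in A_{h'}^{\mathcal{M}}$ with $f(u)=f(v)$, $f(w)<f(v)$ and $(w,v)$ an edge of $D^{\mathcal{M}}_{h'}$. $\mathrm{ORD}(\varphi)$: let $k=|\mathrm{TYPES}_\varphi|$ and extend $\tau$ to $\mathit{ext}(\tau)$ by a new atomic concept $M$, new nominals $o_1,\dots,o_k$, a new atomic role $\mathit{ord}$ and new functional roles $f_1,\dots,f_h$. For an $\mathit{ext}(\tau)$-structure $\mathcal{N}$ with universe $N$, let $\mathcal{M}$ be the substructure of $\mathcal{N}$ (restricted to $\tau$) with universe $M^{\mathcal{N}}$, and $O^{\mathcal{N}}=N\setminus M^{\mathcal{N}}$. Then $\mathcal{N}\in\mathrm{ORD}(\varphi)$ iff: (1) $\mathcal{M}\models\varphi$; (2) $N$ is partitioned into $M^{\mathcal{N}}$ and $O^{\mathcal{N}}=\{o_1^{\mathcal{N}},\dots,o_k^{\mathcal{N}}\}$;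 (3) $(o_i^{\mathcal{N}},o_j^{\mathcal{N}})\in\mathit{ord}^{\mathcal{N}}$ iff $i<j$; (4) for every $1\le h'\le h$, $f_{h'}^{\mathcal{N}}$ is a function from $A_{h'}^{\mathcal{M}}$ to $O^{\mathcal{N}}$; (5) for every $1\le h'\le h$, $f_{h'}^{\mathcal{N}}$ is an $h'$-useful labeling for $\mathcal{M}$ with values in $O^{\mathcal{N}}$ ordered by $\mathit{ord}^{\mathcal{N}}$. *)

From HB Require Import structures.
From mathcomp Require Import all_boot all_order.
Set Implicit Arguments. Unset Strict Implicit. Unset Printing Implicit Defensive.

(* ---------- Signatures and finite structures ----------
   A signature tau is given by types CN (atomic concepts), RN (atomic roles),
   NN (nominals) and a predicate fn : RN -> bool marking the functional roles
   (the set N_F). *)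
Record structure (CN RN NN : Type) (fn : RN -> bool) (D : finType) := Structure {
  cI : CN -> pred D;
  rI : RN -> rel D;
  nI : NN -> D;
  rI_fun : forall r, fn r -> forall x y z, rI r x y -> rI r x z -> y = z;
  dom_ne : 0 < #|D|
}.

Inductive concept (CN RN NN : Type) :=
| CAtom of CN
| CNom of NN
| CNot of concept CN RN NN
| CAnd of concept CN RN NN & concept CN RN NN
| COr of concept CN RN NN & concept CN RN NN
| CEx of RN & bool & concept CN RN NN          (* exists r.C ; bool = true: inverse role r^- *)
| CAtMost of nat & RN & bool & concept CN RN NN. (* exists^{<= n} r.C ; bool = inverse *)

Inductive formula (CN RN NN : Type) :=
| FSub of concept CN RN NN & concept CN RN NN
| FEqv of concept CN RN NN & concept CN RN NN
| FNot of formula CN RN NN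
| FAnd of formula CN RN NN & formula CN RN NN
| FOr of formula CN RN NN & formula CN RN NN.

Arguments CAtom {CN RN NN}. Arguments CNom {CN RN NN}.

Section Decidable.
Variables (CN RN NN : eqType).
Definition concept_eq_dec : comparable (concept CN RN NN).
Proof.
move=> x y; rewrite /decidable.
decide equality; exact: eq_comparable.
Defined.
End Decidable.
HB.instance Definition _ (CN RN NN : eqType) :=
  hasDecEq.Build (concept CN RN NN) (compareP (@concept_eq_dec CN RN NN)).

Section Semantics.
Variables (CN RN NN : Type) (fn : RN -> bool) (D : finType).
Variable M : structure CN NN fn D.

Definition roleI (r : RN) (inv : bool) : rel D :=
  fun x y => if inv then rI M r y x else rI M r x y.

Fixpoint sem (C : concept CN RN NN) : pred D :=
  fun x => match C with
  | CAtom a => cI M a x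
  | CNom o => x == nI M o
  | CNot C1 => ~~ sem C1 x
  | CAnd C1 C2 => sem C1 x && sem C2 x
  | COr C1 C2 => sem C1 x || sem C2 x
  | CEx r inv C1 => [exists y, roleI r inv x y && sem C1 y]
  | CAtMost n r inv C1 => #|[pred y | roleI r inv x y && sem C1 y]| <= n
  end.

Fixpoint sat (phi : formula CN RN NN) : Prop :=
  match phi with
  | FSub C1 C2 => forall x, sem C1 x -> sem C2 x
  | FEqv C1 C2 => forall x, sem C1 x = sem C2 x
  | FNot p => ~ sat p
  | FAnd p q => sat p /\ sat q
  | FOr p q => sat p \/ sat q
  end.
End Semantics.

Fixpoint subcon (CN RN NN : Type) (C : concept CN RN NN) : seq (concept CN RN NN) :=
  C :: match C with
       | CAtom _ | CNom _ => [::]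
       | CNot C1 => subcon C1
       | CAnd C1 C2 | COr C1 C2 => subcon C1 ++ subcon C2
       | CEx _ _ C1 | CAtMost _ _ _ C1 => subcon C1
       end.

Fixpoint Con (CN RN NN : Type) (phi : formula CN RN NN) : seq (concept CN RN NN) :=
  match phi with
  | FSub C1 C2 | FEqv C1 C2 => subcon C1 ++ subcon C2
  | FNot p => Con p
  | FAnd p q | FOr p q => Con p ++ Con q
  end.

(* |TYPES_phi| = |powerset of Con(phi)| *)
Definition ntypes (CN RN NN : eqType) (phi : formula CN RN NN) : nat :=
  2 ^ size (undup (Con phi)).

Definition same_type (CN RN NN : eqType) (fn : RN -> bool) (D : finType)
  (M : structure CN NN fn D) (phi : formula CN RN NN) (u v : D) : Prop :=
  forall C, C \in Con phi -> sem M C u = sem M C v.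

(* A labeling f with values in L
   (strictly ordered by lt) is only looked at on A^M. *)
Definition edgeD (CN RN NN : Type) (fn : RN -> bool) (D : finType)
  (M : structure CN NN fn D) (A : CN) (S : pred RN) (w v : D) : Prop :=
  [/\ cI M A w, cI M A v & exists2 s, S s & rI M s w v].

Definition useful (CN RN NN : eqType) (fn : RN -> bool) (D : finType)
  (M : structure CN NN fn D) (phi : formula CN RN NN)
  (A B : CN) (S : pred RN) (L : Type) (lt : L -> L -> Prop) (f : D -> L) : Prop :=
  (forall u v, cI M A u -> cI M A v -> f u = f v -> same_type M phi u v) /\
  (forall u, cI M A u ->
     cI M B u \/
     exists v w, [/\ cI M A v, cI M A w, f u = f v, lt (f w) (f v) & edgeD M A S w v]).

(* ---------- ALCQIO_{b,Re} formulae ----------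
   RE = {Reach(Bs i, Ss i, As i) | i < h}, DI = list of pairs (A1,A2) meaning A1 /\ A2 == bot. *)
Definition same_assertion (CN RN : Type) (h : nat) (Bs As : 'I_h -> CN)
  (Ss : 'I_h -> pred RN) (i j : 'I_h) : Prop :=
  [/\ Bs i = Bs j, As i = As j & Ss i =1 Ss j].

Definition is_ALCQIO_bRe (CN RN : eqType) (fn : RN -> bool) (h : nat)
  (Bs As : 'I_h -> CN) (Ss : 'I_h -> pred RN) (DI : seq (CN * CN)) : Prop :=
  (forall i r, Ss i r -> fn r) /\
  (forall i j, ~ same_assertion Bs As Ss i j ->
     (exists r, Ss i r /\ Ss j r) ->
     ((As i, As j) \in DI) || ((As j, As i) \in DI)).

(* ---------- ext(tau) and ORD(phi) ----------
   ext(tau): concepts  option CN  (None = the new concept M),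
             roles     RN + option 'I_h  (inr None = ord, inr (Some i) = f_(i+1)),
             nominals  NN + 'I_k  (inr i = o_(i+1)). *)
Definition ext_fn (RN : Type) (fn : RN -> bool) (h : nat) (r : RN + option 'I_h) : bool :=
  match r with
  | inl r0 => fn r0
  | inr None => false
  | inr (Some _) => true
  end.

Definition ext_structure (CN RN NN : Type) (fn : RN -> bool) (h k : nat) (Dn : finType) :=
  structure (option CN) (NN + 'I_k) (@ext_fn RN fn h) Dn.

Definition Muniv (CN RN NN : Type) (fn : RN -> bool) (h k : nat) (Dn : finType)
  (N : ext_structure CN NN fn h k Dn) : pred Dn := cI N None.

(* M is the tau-reduct of the substructure of N with universe M^N *)
Definition is_restriction (CN RN NN : Type) (fn : RN -> bool) (h k : nat) (Dn : finType)
  (N : ext_structure CN NN fn h k Dn)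
  (M : structure CN NN fn {x : Dn | Muniv N x}) : Prop :=
  [/\ (forall a (u : {x : Dn | Muniv N x}), cI M a u = cI N (Some a) (val u)),
      (forall r (u v : {x : Dn | Muniv N x}), rI M r u v = rI N (inl r) (val u) (val v))
    & (forall o, val (nI M o) = nI N (inl o))].
Arguments is_restriction {CN RN NN fn h k Dn} N M.

Definition ORD (CN RN NN : eqType) (fn : RN -> bool) (phi : formula CN RN NN)
  (h : nat) (Bs As : 'I_h -> CN) (Ss : 'I_h -> pred RN) (Dn : finType)
  (N : ext_structure CN NN fn h (ntypes phi) Dn) : Prop :=
  let k := ntypes phi in
  let o := fun i : 'I_k => nI N (inr i) in
  let ord := rI N (inr None) in
  let f := fun i : 'I_h => rI N (inr (Some i)) in
  exists M : structure CN NN fn {x : Dn | Muniv N x},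
  is_restriction N M /\
  [/\ sat M phi,
      (forall x, ~~ Muniv N x <-> exists i, x = o i),
      (forall i j : 'I_k, ord (o i) (o j) <-> i < j),
      (forall i : 'I_h,
         (forall u, cI M (As i) u -> exists y, f i (val u) y) /\
         (forall x y, f i x y ->
            (exists2 u, val u = x & cI M (As i) u) /\ ~~ Muniv N y))
    &
      (forall i : 'I_h, exists g : {x : Dn | Muniv N x} -> Dn,
         (forall u, cI M (As i) u -> f i (val u) (g u)) /\
         useful M phi (As i) (Bs i) (Ss i) (fun a b => ord a b) g)].
Arguments ORD {CN RN NN fn} phi {h} Bs As Ss {Dn} N.
Arguments useful {CN RN NN fn D} M phi A B S {L} lt f.

From HB Require Import structures.
From mathcomp Require Import all_boot all_order.
Set Implicit Arguments. Unset Strict Implicit. Unset Printing Implicit Defensive.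

(* If N is in ORD(phi), its M-part is a model of phi, and by (4) every label
   f_h'(u) is one of the nominals o_1, ..., o_k, which (3) orders exactly like
   their indices; reading off the index of the label gives an h'-useful
   labeling with values in [1, k].  Conversely, from a model M of phi with
   useful labelings f_h', adjoin k fresh elements o_1 < ... < o_k and let
   f_h' send u to o_(f_h'(u)): the M-part of the result is isomorphic to M,
   and isomorphisms preserve ALCQIO_b-satisfaction and useful labelings. *)

Lemma card_preim_inj_surj (T1 T2 : finType) (p : T1 -> T2) (P : pred T2) :
  injective p -> (forall y, exists x, y = p x) ->
  #|[pred x | P (p x)]| = #|[pred y | P y]|.
Proof.
move=> p_inj p_surj; rewrite -(card_image p_inj); apply: eq_card => y.
apply/imageP/idP => [[x Px ->] //|Py].
by have [x def_y] := p_surj y; exists x; rewrite // inE -def_y.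
Qed.

Section Isomorphism.
Variables (CN RN NN : eqType) (fn : RN -> bool) (D1 D2 : finType).
Variables (M1 : structure CN NN fn D1) (M2 : structure CN NN fn D2).
Variable p : D1 -> D2.
Hypotheses (p_inj : injective p) (p_surj : forall y, exists x, y = p x).
Hypothesis cI_p : forall a x, cI M2 a (p x) = cI M1 a x.
Hypothesis rI_p : forall r x y, rI M2 r (p x) (p y) = rI M1 r x y.
Hypothesis nI_p : forall o, nI M2 o = p (nI M1 o).

Lemma roleI_iso r inv x y : roleI M2 r inv (p x) (p y) = roleI M1 r inv x y.
Proof. by rewrite /roleI; case: inv; rewrite rI_p. Qed.

Lemma sem_iso (C : concept CN RN NN) x : sem M2 C (p x) = sem M1 C x.
Proof.
elim: C x => [a|o|C IH|C1 IH1 C2 IH2|C1 IH1 C2 IH2|r inv C IH|n r inv C IH] x /=.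
- exact: cI_p.
- by rewrite nI_p (inj_eq p_inj).
- by rewrite IH.
- by rewrite IH1 IH2.
- by rewrite IH1 IH2.
- apply/existsP/existsP => [[y /andP[xy Cy]]|[y /andP[xy Cy]]].
    have [z def_y] := p_surj y; exists z.
    by rewrite -IH -roleI_iso -def_y xy.
  by exists (p y); rewrite IH roleI_iso xy.
- rewrite -(card_preim_inj_surj (fun y => roleI M2 r inv (p x) y && sem M2 C y)
            p_inj p_surj).
  by congr (_ <= n); apply: eq_card => y; rewrite !inE roleI_iso IH.
Qed.

Lemma sat_iso (phi : formula CN RN NN) : sat M2 phi <-> sat M1 phi.
Proof.
elim: phi => [C1 C2|C1 C2|psi IH|psi IHpsi chi IHchi|psi IHpsi chi IHchi] /=;
  try tauto.
all: split=> H x; first by rewrite -!sem_iso; apply: H.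
all: by have [z ->] := p_surj x; rewrite !sem_iso; apply: H.
Qed.

Lemma same_type_iso (phi : formula CN RN NN) u v :
  same_type M2 phi (p u) (p v) <-> same_type M1 phi u v.
Proof. by split=> H C /H; rewrite !sem_iso. Qed.

Lemma edgeD_iso A S w v : edgeD M2 A S (p w) (p v) <-> edgeD M1 A S w v.
Proof.
rewrite /edgeD !cI_p.
by split=> -[Aw Av [s Ss wv]]; split=> //; exists s; rewrite ?rI_p in wv *.
Qed.

Lemma useful_iso (phi : formula CN RN NN) A B S (L : Type) (lt : L -> L -> Prop)
    (f1 : D1 -> L) (f2 : D2 -> L) :
  (forall x, f2 (p x) = f1 x) ->
  useful M1 phi A B S lt f1 -> useful M2 phi A B S lt f2.
Proof.
move=> f2p [f1_type f1_reach]; split=> [y1 y2|y].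
  have [[u ->] [v ->]] := (p_surj y1, p_surj y2).
  by rewrite !cI_p !f2p => Au Av /(f1_type u v Au Av) /same_type_iso.
have [u ->] := p_surj y; rewrite !cI_p => Au.
case: (f1_reach u Au) => [Bu|[v [w [Av Aw uv wv vw]]]]; [by left | right].
by exists (p v), (p w); rewrite !cI_p !f2p; split=> //; apply/edgeD_iso.
Qed.
End Isomorphism.

Section Relabel.
Variables (CN RN NN : eqType) (fn : RN -> bool) (D : finType).
Variables (M : structure CN NN fn D) (phi : formula CN RN NN) (A B : CN) (S : pred RN).

Lemma useful_relabel (L L' : Type) (lt : L -> L -> Prop) (lt' : L' -> L' -> Prop)
    (e : L -> L') (f : D -> L) (g : D -> L') :
  injective e -> (forall a b, lt' (e a) (e b) <-> lt a b) ->
  (forall u, cI M A u -> g u = e (f u)) ->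
  useful M phi A B S lt' g <-> useful M phi A B S lt f.
Proof.
move=> e_inj e_lt gef.
have g_eq u v : cI M A u -> cI M A v -> (g u = g v) <-> (f u = f v).
  by move=> Au Av; rewrite !gef //; split=> [/e_inj|->].
split=> -[types reach]; split=> [u v Au Av|u Au].
- by move/(g_eq u v Au Av); apply: types.
- case: (reach u Au) => [Bu|[v [w [Av Aw uv wv vw]]]]; [by left | right].
  exists v, w; split=> //; first exact/(g_eq u v).
  by apply/e_lt; rewrite -!gef.
- by move/(g_eq u v Au Av); apply: types.
- case: (reach u Au) => [Bu|[v [w [Av Aw uv wv vw]]]]; [by left | right].
  exists v, w; split=> //; first exact/(g_eq u v).
  by rewrite !gef //; apply/e_lt.
Qed.
End Relabel.

Lemma ltn_ord_embedding_inj (T : Type) k (lt : rel T) (o : 'I_k -> T) :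
  (forall i j, lt (o i) (o j) <-> i < j) -> injective o.
Proof.
move=> o_lt i j oij; case: (ltngtP i j) => [||/val_inj //] /o_lt;
  by rewrite oij => /o_lt; rewrite ltnn.
Qed.

Lemma fin_decode (D : finType) (T : eqType) k (o : 'I_k -> T) (P : pred D)
    (g : D -> T) :
  0 < k -> (forall u, P u -> exists j, g u = o j) ->
  exists f : D -> 'I_k, forall u, P u -> o (f u) = g u.
Proof.
move=> k_gt0 g_o; exists (fun u => odflt (Ordinal k_gt0) [pick j | o j == g u]).
move=> u /g_o[j def_gu]; case: pickP => [i /eqP //|/(_ j)].
by rewrite def_gu eqxx.
Qed.

Lemma ntypes_gt0 (CN RN NN : eqType) (phi : formula CN RN NN) : 0 < ntypes phi.
Proof. by rewrite /ntypes expn_gt0. Qed.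

Section OrdExtension.
Variables (CN RN NN : eqType) (fn : RN -> bool) (k h : nat) (As : 'I_h -> CN).
Variables (D : finType) (M : structure CN NN fn D) (F : 'I_h -> D -> 'I_k).

Definition ext_dom : finType := (D + 'I_k)%type.

(* On the fresh elements [inr j] the value is junk, but [f_i] only reads it on [A_i]. *)
Definition ext_label (i : 'I_h) (x : ext_dom) : ext_dom :=
  if x is inl u then inr (F i u) else x.

Definition ext_cI (a : option CN) (x : ext_dom) : bool :=
  match a, x with
  | Some a, inl u => cI M a u
  | None, inl _ => true
  | _, _ => false
  end.

Definition ext_rI (r : RN + option 'I_h) (x y : ext_dom) : bool :=
  match r, x, y with
  | inl r, inl u, inl v => rI M r u v
  | inr None, inr i, inr j => i < j
  | inr (Some i), inl u, _ => cI M (As i) u && (ext_label i x == y)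
  | _, _, _ => false
  end.

Definition ext_nI (o : NN + 'I_k) : ext_dom :=
  match o with inl o => inl (nI M o) | inr j => inr j end.

Lemma ext_rI_fun r : ext_fn fn r ->
  forall x y z, ext_rI r x y -> ext_rI r x z -> y = z.
Proof.
case: r => [r|[i|]] //= fr [x|x] //.
- by case=> [y|y] [z|z] //= xy xz; rewrite (rI_fun fr xy xz).
- by move=> y z /andP[_ /eqP <-] /andP[_ /eqP <-].
Qed.

Lemma ext_dom_gt0 : 0 < #|ext_dom|.
Proof. by have /card_gt0P[d _] := dom_ne M; apply/card_gt0P; exists (inl d). Qed.

Definition ext_model : ext_structure CN NN fn h k ext_dom :=
  Structure ext_cI ext_nI ext_rI_fun ext_dom_gt0.

Definition reduct_dom : finType := {x : ext_dom | Muniv ext_model x}.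

Definition in_reduct (u : D) : reduct_dom := exist _ (inl u) isT.

Lemma in_reduct_inj : injective in_reduct.
Proof. by move=> u v /(congr1 val) [->]. Qed.

Lemma in_reduct_surj (s : reduct_dom) : exists u, s = in_reduct u.
Proof. by case: s => [[u|j] Ms] //; exists u; apply: val_inj. Qed.

Lemma reduct_rI_fun r : fn r -> forall x y z : reduct_dom,
  ext_rI (inl r) (val x) (val y) -> ext_rI (inl r) (val x) (val z) -> y = z.
Proof. by move=> fr x y z xy xz; apply: val_inj; apply: (@ext_rI_fun (inl r)) xy xz. Qed.

Lemma reduct_dom_gt0 : 0 < #|reduct_dom|.
Proof. by have /card_gt0P[d _] := dom_ne M; apply/card_gt0P; exists (in_reduct d). Qed.

Definition reduct : structure CN NN fn reduct_dom :=
  Structure (fun a s => ext_cI (Some a) (val s)) (fun o => in_reduct (nI M o))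
            (rI := fun r s t => ext_rI (inl r) (val s) (val t))
            reduct_rI_fun reduct_dom_gt0.

Lemma reduct_is_restriction : is_restriction ext_model reduct.
Proof. by []. Qed.

Lemma sat_reduct phi : sat reduct phi <-> sat M phi.
Proof. exact: (sat_iso (p := in_reduct) in_reduct_inj in_reduct_surj). Qed.

Lemma useful_reduct phi A B S (L : Type) (lt : L -> L -> Prop)
    (f : D -> L) (g : reduct_dom -> L) :
  (forall u, g (in_reduct u) = f u) ->
  useful M phi A B S lt f -> useful reduct phi A B S lt g.
Proof. exact: (useful_iso (p := in_reduct) in_reduct_inj in_reduct_surj). Qed.
End OrdExtension.

Lemma ORD_ext_model (CN RN NN : eqType) (fn : RN -> bool) (phi : formula CN RN NN)
    (h : nat) (Bs As : 'I_h -> CN) (Ss : 'I_h -> pred RN) (D : finType)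
    (M : structure CN NN fn D) (F : 'I_h -> D -> 'I_(ntypes phi)) :
  sat M phi ->
  (forall i, useful M phi (As i) (Bs i) (Ss i) (fun a b : 'I_(ntypes phi) => a < b) (F i)) ->
  ORD phi Bs As Ss (ext_model As M F).
Proof.
move=> Msat F_useful; exists (reduct As M F); split; first exact: reduct_is_restriction.
split.
- exact/sat_reduct.
- by case=> [u|j] /=; split=> //; [case | exists j].
- by [].
- move=> i; split=> [s|[u|j] y //= /andP[Au /eqP <-]].
    by have [u ->] := in_reduct_surj s => /= Au; exists (inr (F i u)); rewrite /= Au eqxx.
  by split=> //; exists (in_reduct As M F u).
- move=> i; exists (fun s => ext_label F i (val s)); split.
    by move=> s; have [u ->] := in_reduct_surj s => /= Au; rewrite Au eqxx.
  have inr_useful : useful M phi (As i) (Bs i) (Ss i)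
      (fun a b => rI (ext_model As M F) (inr None) a b) (fun u => inr (F i u)).
    by apply: (useful_relabel phi (Bs i) (Ss i) inr_inj _ _).2 (F_useful i).
  exact: useful_reduct inr_useful.
Qed.

Lemma ORD_useful_labelings (CN RN NN : eqType) (fn : RN -> bool)
    (phi : formula CN RN NN) (h : nat) (Bs As : 'I_h -> CN) (Ss : 'I_h -> pred RN)
    (Dn : finType) (N : ext_structure CN NN fn h (ntypes phi) Dn) :
  ORD phi Bs As Ss N ->
  exists M : structure CN NN fn {x : Dn | Muniv N x},
    sat M phi /\ forall i : 'I_h, exists f : _ -> 'I_(ntypes phi),
      useful M phi (As i) (Bs i) (Ss i) (fun a b : 'I_(ntypes phi) => a < b) f.
Proof.
case=> M [_ [Msat partition o_lt f_fun f_useful]]; exists M; split=> // i.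
have [g [f_g g_useful]] := f_useful i.
have o_inj := ltn_ord_embedding_inj o_lt.
have [f o_f] : exists f, forall u, cI M (As i) u -> nI N (inr (f u)) = g u.
  apply: (fin_decode (o := fun j => nI N (inr j))) (ntypes_gt0 phi) _ => u Au.
  by have [_ /partition[j ->]] := (f_fun i).2 _ _ (f_g u Au); exists j.
exists f; apply: (useful_relabel phi (Bs i) (Ss i) o_inj o_lt _).1 g_useful.
by move=> u /o_f.
Qed.

Theorem lemma9 (CN RN NN : eqType) (fn : RN -> bool) (phi : formula CN RN NN)
  (h : nat) (Bs As : 'I_h -> CN) (Ss : 'I_h -> pred RN) (DI : seq (CN * CN))
  (HPhi : is_ALCQIO_bRe fn Bs As Ss DI) :
  (exists (Dn : finType) (N : ext_structure CN NN fn h (ntypes phi) Dn),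
      ORD phi Bs As Ss N)
  <->
  (exists (D : finType) (M : structure CN NN fn D),
      sat M phi /\
      forall i : 'I_h, exists f : D -> 'I_(ntypes phi),
        useful M phi (As i) (Bs i) (Ss i) (fun a b : 'I_(ntypes phi) => a < b) f).
Proof.
split=> [[Dn [N /ORD_useful_labelings[M M_useful]]] | [D [M [Msat useful_F]]]].
  by exists _, M.
have [F F_useful] := fin_all_exists useful_F.
by exists _, (ext_model As M F); apply: ORD_ext_model.
Qed.
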